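(* Let $\mathcal{G}$ be a nonatomic aggregative game as in the context satisfying Assumptions (N1), (N2), (N3), with cost functions of the form $f_\theta(\bm{x}_\theta,\bm{X})=\langle\bm{x}_\theta,\mathbf{c}(\bm{X})\rangle-u_\theta(\bm{x}_\theta)$, where $\mathbf{c}$ is a monotone map on $\mathcal{M}$ (i.e. $\langle\mathbf{c}(\bm{X})-\mathbf{c}(\bm{Y}),\bm{X}-\bm{Y}\rangle\ge0$) and each $u_\theta$ is concave on $\mathcal{M}$. Then: (1) $\mathcal{G}$ is monotone; (2) if $u_\theta$ is strictly concave on $\mathcal{M}$ for every $\theta$, then $\mathcal{G}$ is strictly monotone; (3) if $\mathbf{c}$ is strictly monotone on $\mathcal{M}$, then $\mathcal{G}$ is aggregatively strictly monotone; (4) if each $u_\theta$ is strongly concave on $\mathcal{M}$ with modulus $\alpha_\theta$ and $\inf_\theta\alpha_\theta=\alpha>0$, then $\mathcal{G}$ is strongly monotone with modulus $\alpha$; (5) if $\mathbf{c}$ is strongly monotone on $\mathcal{M}$ with modulus $\beta$, then $\mathcal{G}$ is aggregatively strongly monotone with modulus $\beta$.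
   Context: Nonatomic game: $T\ge1$, $\Theta=[0,1]$ with Lebesgue measure; player $\theta$ has pure-action set $\mathcal{X}_\theta\subset\mathbb{R}^T$ and cost $f_\theta(\bm{x}_\theta,\bm{X})$, $\bm{X}$ the aggregate. $\mathcal{X}=\{\bm{x}\in L^2([0,1],\mathbb{R}^T):\bm{x}_\theta\in\mathcal{X}_\theta\text{ a.e.}\}$, $\int\bm{x}=(\int_0^1x_{\theta,t}d\theta)_t$, $\mathcal{S}=\{\int\bm{x}:\bm{x}\in\mathcal{X}\}$. Fix $M>0$, $\mathcal{M}=[0,M+1]^T$, $\mathcal{M}'$ a neighbourhood of $\mathcal{M}$. (N1) $\theta\mapsto\mathcal{X}_\theta$ has nonempty convex compact values, Borel graph, and $\mathcal{X}_\theta$ in the closed ball of radius $M$ about $0$. (N2) $f_\theta$ defined on $\mathcal{M}'^2$, bounded on $\mathcal{M}^2$; for each $\bm{Y}\in\mathcal{M}$: $(\theta,\bm{x})\mapsto f_\theta(\bm{x},\bm{Y})$ measurable on the graph of $\mathcal{X}$; $f_\theta(\cdot,\bm{Y})$ continuous and convex on $\mathcal{M}'$; subgradients in $\partial_1f_\theta(\bm{x},\bm{Y})$ (subdifferential in the first variable), $\bm{x},\bm{Y}\in\mathcal{M}$, are bounded in norm by a constant $B_f$. (N3) With $Br(\bm{Y})=\{\bm{x}\in\mathcal{X}:\bm{x}_\theta\in\arg\min_{\mathcal{X}_\theta}f_\theta(\cdot,\bm{Y})\,\forall\theta\}$ and $\mathcal{D}(\bm{x},\bm{Y})(\theta)=\{\mathbf{g}\in\partial_1f_\theta(\bm{x}_\theta,\bm{Y}):\langle\mathbf{g},\bm{y}-\bm{x}_\theta\rangle\ge0\,\forall\bm{y}\in\mathcal{X}_\theta\}$,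 for all $\bm{Y}\in\mathcal{S}$ and $\bm{x}\in Br(\bm{Y})$ the correspondence $\theta\mapsto\mathcal{D}(\bm{x},\bm{Y})(\theta)$ is measurable. $H(\bm{x})=\{\mathbf{g}\in L^2([0,1],\mathbb{R}^T):\mathbf{g}_\theta\in\partial_1f_\theta(\bm{x}_\theta,\int\bm{x})\text{ a.e.}\}$. For all $\bm{x},\bm{y}\in L^2([0,1],\mathcal{M})$, $\mathbf{g}\in H(\bm{x})$, $\mathbf{h}\in H(\bm{y})$, let $I=\int_\Theta\langle\mathbf{g}_\theta-\mathbf{h}_\theta,\bm{x}_\theta-\bm{y}_\theta\rangle d\theta$. The game is monotone if always $I\ge0$; strictly monotone if moreover $I=0$ only when $\bm{x}=\bm{y}$ a.e.; aggregatively strictly monotone if moreover $I=0$ only when $\int\bm{x}=\int\bm{y}$; strongly monotone with modulus $\alpha$ if $I\ge\alpha\|\bm{x}-\bm{y}\|_2^2$; aggregatively strongly monotone with modulus $\beta$ if $I\ge\beta\|\int\bm{x}-\int\bm{y}\|^2$. *)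

From HB Require Import structures.
From mathcomp Require Import all_boot all_order all_algebra.
From mathcomp Require Import all_classical all_reals all_analysis.
Set Implicit Arguments. Unset Strict Implicit. Unset Printing Implicit Defensive.
Import Order.TTheory GRing.Theory Num.Theory numFieldNormedType.Exports.
Local Open Scope classical_set_scope.
Local Open Scope ring_scope.

Section NonatomicGame.
Context {R : realType} {T : nat}.
Local Notation vec := 'rV[R]_T.

Definition dotv (a b : vec) : R := \sum_(t < T) a ord0 t * b ord0 t.
Definition sqnorm (a : vec) : R := dotv a a.

Definition Theta : set R := `[0, 1]%classic.
Definition leb := @lebesgue_measure R.

Definition Mset (Mb : R) : set vec := [set X | forall t, 0 <= X ord0 t <= Mb + 1].

Definition nbhs_of_set (S Dom : set vec) : Prop :=
  exists U : set vec, [/\ open U, S `<=` U & U `<=` Dom].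

Definition borel_sets (U : topologicalType) : set (set U) := <<s open >>.

Definition L2 (x : R -> vec) : Prop := forall t : 'I_T,
  measurable_fun Theta (fun th => x th ord0 t) /\
  leb.-integrable Theta (fun th => ((x th ord0 t) ^+ 2)%:E).

Definition L2_in (S : set vec) (x : R -> vec) : Prop :=
  L2 x /\ {ae leb, forall th, Theta th -> S (x th)}.

Definition agg (x : R -> vec) : vec :=
  \row_(t < T) Rintegral leb Theta (fun th => x th ord0 t).

Definition profiles (Xs : R -> set vec) : set (R -> vec) :=
  [set x | L2 x /\ {ae leb, forall th, Theta th -> Xs th (x th)}].

Definition aggregates (Xs : R -> set vec) : set vec := agg @` profiles Xs.

Definition graphX (Xs : R -> set vec) : set (R * vec) :=
  [set p | Theta p.1 /\ Xs p.1 p.2].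

Definition convex_vset (S : set vec) : Prop :=
  forall x y (l : R), S x -> S y -> 0 <= l <= 1 -> S (l *: x + (1 - l) *: y).

(* convexity of F on S (segment clause makes sense for non-convex S too) *)
Definition convex_on (S : set vec) (F : vec -> R) : Prop :=
  forall x y (l : R), S x -> S y -> 0 <= l <= 1 -> S (l *: x + (1 - l) *: y) ->
    F (l *: x + (1 - l) *: y) <= l * F x + (1 - l) * F y.

Definition concave_on (S : set vec) (F : vec -> R) : Prop :=
  forall x y (l : R), S x -> S y -> 0 <= l <= 1 ->
    l * F x + (1 - l) * F y <= F (l *: x + (1 - l) *: y).

Definition strictly_concave_on (S : set vec) (F : vec -> R) : Prop :=
  forall x y (l : R), S x -> S y -> x <> y -> 0 < l < 1 ->
    l * F x + (1 - l) * F y < F (l *: x + (1 - l) *: y).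

(* strongly concave with modulus a :  F + (a/2) |.|^2 is concave *)
Definition strongly_concave_on (S : set vec) (a : R) (F : vec -> R) : Prop :=
  forall x y (l : R), S x -> S y -> 0 <= l <= 1 ->
    l * F x + (1 - l) * F y + a / 2 * (l * (1 - l)) * sqnorm (x - y)
      <= F (l *: x + (1 - l) *: y).

Definition monotone_map_on (S : set vec) (c : vec -> vec) : Prop :=
  forall X Y, S X -> S Y -> 0 <= dotv (c X - c Y) (X - Y).
Definition strictly_monotone_map_on (S : set vec) (c : vec -> vec) : Prop :=
  forall X Y, S X -> S Y -> X <> Y -> 0 < dotv (c X - c Y) (X - Y).
Definition strongly_monotone_map_on (S : set vec) (b : R) (c : vec -> vec) : Prop :=
  forall X Y, S X -> S Y -> b * sqnorm (X - Y) <= dotv (c X - c Y) (X - Y).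

(* a cost f : theta -> x_theta -> X -> R, defined on Dom^2 (Dom = calM') *)
Definition subdiff (Dom : set vec) (f : R -> vec -> vec -> R) (th : R)
    (x Y : vec) : set vec :=
  [set g | forall z, Dom z -> f th x Y + dotv g (z - x) <= f th z Y].

Definition Hmap (Dom : set vec) (f : R -> vec -> vec -> R) (x : R -> vec) :
    set (R -> vec) :=
  [set g | L2 g /\
     {ae leb, forall th, Theta th -> subdiff Dom f th (x th) (agg x) (g th)}].

Definition Iint (x y g h : R -> vec) : R :=
  Rintegral leb Theta (fun th => dotv (g th - h th) (x th - y th)).

Definition monotone_game (Mb : R) Dom f : Prop :=
  forall x y g h, L2_in (Mset Mb) x -> L2_in (Mset Mb) y ->
    Hmap Dom f x g -> Hmap Dom f y h -> 0 <= Iint x y g h.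

Definition strictly_monotone_game (Mb : R) Dom f : Prop :=
  monotone_game Mb Dom f /\
  forall x y g h, L2_in (Mset Mb) x -> L2_in (Mset Mb) y ->
    Hmap Dom f x g -> Hmap Dom f y h -> Iint x y g h = 0 ->
    {ae leb, forall th, Theta th -> x th = y th}.

Definition agg_strictly_monotone_game (Mb : R) Dom f : Prop :=
  monotone_game Mb Dom f /\
  forall x y g h, L2_in (Mset Mb) x -> L2_in (Mset Mb) y ->
    Hmap Dom f x g -> Hmap Dom f y h -> Iint x y g h = 0 -> agg x = agg y.

Definition strongly_monotone_game (Mb : R) Dom f (a : R) : Prop :=
  forall x y g h, L2_in (Mset Mb) x -> L2_in (Mset Mb) y ->
    Hmap Dom f x g -> Hmap Dom f y h ->
    a * Rintegral leb Theta (fun th => sqnorm (x th - y th)) <= Iint x y g h.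

Definition agg_strongly_monotone_game (Mb : R) Dom f (b : R) : Prop :=
  forall x y g h, L2_in (Mset Mb) x -> L2_in (Mset Mb) y ->
    Hmap Dom f x g -> Hmap Dom f y h ->
    b * sqnorm (agg x - agg y) <= Iint x y g h.

Definition AssumN1 (Mb : R) (Xs : R -> set vec) : Prop :=
  (forall th, Theta th ->
     [/\ Xs th !=set0, convex_vset (Xs th), compact (Xs th)
       & forall x, Xs th x -> sqnorm x <= Mb ^+ 2]) /\
  borel_sets (graphX Xs).

Definition AssumN2 (Mb : R) (Dom : set vec) (Xs : R -> set vec)
    (f : R -> vec -> vec -> R) : Prop :=
  [/\ exists K : R, forall th x Y, Theta th -> Mset Mb x -> Mset Mb Y ->
          `|f th x Y| <= K,
      forall Y, Mset Mb Y -> forall B : set R, borel_sets B ->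
          borel_sets (graphX Xs `&` (fun p => f p.1 p.2 Y) @^-1` B),
      forall th Y, Theta th -> Mset Mb Y ->
          {within Dom, continuous (fun x => f th x Y)} /\
          convex_on Dom (fun x => f th x Y)
    & exists Bf : R, forall th x Y g, Theta th -> Mset Mb x -> Mset Mb Y ->
          subdiff Dom f th x Y g -> sqnorm g <= Bf ^+ 2].

Definition argmin_on (S : set vec) (F : vec -> R) : set vec :=
  [set x | S x /\ forall z, S z -> F x <= F z].

Definition Br (Xs : R -> set vec) (f : R -> vec -> vec -> R) (Y : vec) :
    set (R -> vec) :=
  [set x | profiles Xs x /\
     forall th, Theta th -> argmin_on (Xs th) (fun z => f th z Y) (x th)].

Definition Dcorr (Dom : set vec) (Xs : R -> set vec) (f : R -> vec -> vec -> R)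
    (x : R -> vec) (Y : vec) (th : R) : set vec :=
  [set g | subdiff Dom f th (x th) Y g /\
     forall z, Xs th z -> 0 <= dotv g (z - x th)].

Definition measurable_corr (F : R -> set vec) : Prop :=
  forall U : set vec, open U ->
    measurable [set th | Theta th /\ (F th `&` U !=set0)].

Definition AssumN3 (Dom : set vec) (Xs : R -> set vec)
    (f : R -> vec -> vec -> R) : Prop :=
  forall Y, aggregates Xs Y -> forall x, Br Xs f Y x ->
    measurable_corr (Dcorr Dom Xs f x Y).

Definition lin_cost (c : vec -> vec) (u : R -> vec -> R) : R -> vec -> vec -> R :=
  fun th x X => dotv x (c X) - u th x.

End NonatomicGame.

From HB Require Import structures.
From mathcomp Require Import all_boot all_order all_algebra.
From mathcomp Require Import all_classical all_reals all_analysis.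
From mathcomp Require Import ring lra.
Import Order.TTheory GRing.Theory Num.Theory numFieldNormedType.Exports.
Import measurable_realfun.
Local Open Scope classical_set_scope.
Local Open Scope ring_scope.
Set Implicit Arguments. Unset Strict Implicit. Unset Printing Implicit Defensive.

(* A subgradient g of x |-> <x, c(X)> - u(x) at a yields the supergradient
   c(X) - g of u at a.  Splitting c(X) - c(Y) off the integrand of I gives
     I = \int <(c(Y) - h) - (c(X) - g), x - y> + <c(X) - c(Y), X - Y>,
   since integration commutes with pairing against a constant vector.  The
   first integrand is nonnegative because supergradients of any function form
   a monotone (decreasing) map; it is positive off the diagonal when u is
   strictly concave and at least alpha |x - y|^2 when u is alpha-strongly
   concave.  The aggregate term is handled by the assumption on c. *)

Section inner_product.
Context {R : realType} {T : nat}.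
Implicit Types (a b v : 'rV[R]_T) (k : R).

Lemma dotvC a b : dotv a b = dotv b a.
Proof. by apply: eq_bigr => i _; rewrite mulrC. Qed.

Lemma dotvDl a b v : dotv (a + b) v = dotv a v + dotv b v.
Proof. by rewrite /dotv -big_split; apply: eq_bigr => i _; rewrite mxE mulrDl. Qed.

Lemma dotvNl a v : dotv (- a) v = - dotv a v.
Proof. by rewrite /dotv -sumrN; apply: eq_bigr => i _; rewrite mxE mulNr. Qed.

Lemma dotvBl a b v : dotv (a - b) v = dotv a v - dotv b v.
Proof. by rewrite dotvDl dotvNl. Qed.

Lemma dotvZl k a v : dotv (k *: a) v = k * dotv a v.
Proof. by rewrite /dotv mulr_sumr; apply: eq_bigr => i _; rewrite mxE mulrA. Qed.

Lemma dotvBr a b v : dotv v (a - b) = dotv v a - dotv v b.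
Proof. by rewrite dotvC dotvBl !(dotvC v). Qed.

Lemma dotvZr k a v : dotv v (k *: a) = k * dotv v a.
Proof. by rewrite dotvC dotvZl dotvC. Qed.

Lemma sqnorm_ge0 a : 0 <= sqnorm a.
Proof. by apply: sumr_ge0 => i _; rewrite -expr2 sqr_ge0. Qed.

Lemma sqnormBC a b : sqnorm (a - b) = sqnorm (b - a).
Proof. by rewrite /sqnorm -opprB dotvNl dotvC dotvNl opprK. Qed.

Lemma convBl k a b : k *: a + (1 - k) *: b - a = (1 - k) *: (b - a).
Proof. by apply/rowP => i; rewrite !mxE; ring. Qed.

Lemma convBr k a b : k *: a + (1 - k) *: b - b = k *: (a - b).
Proof. by apply/rowP => i; rewrite !mxE; ring. Qed.

Lemma Mset_convex (Mb : R) : convex_vset (Mset (T:=T) Mb).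
Proof.
move=> a b k Ma Mb' /andP[k0 k1] t; rewrite !mxE.
have /andP[a0 a1] := Ma t; have /andP[b0 b1] := Mb' t.
apply/andP; split; nra.
Qed.

End inner_product.

Lemma ler_lt1M {R : realFieldType} (x y : R) : 0 <= y ->
  (forall k, 0 < k < 1 -> k * x <= y) -> x <= y.
Proof.
move=> y0 xy; rewrite leNgt; apply/negP => yx.
have x0 : 0 < x by exact: le_lt_trans yx.
pose k := (x + y) / (2 * x).
have kx : k * x = (x + y) / 2 by rewrite /k; field; rewrite gt_eqF.
have k01 : 0 < k < 1.
  apply/andP; split; first by apply: divr_gt0; lra.
  by rewrite ltr_pdivrMr; lra.
by have := xy k k01; rewrite kx; lra.
Qed.

Section supergradient.
Context {R : realType} {T : nat}.
Local Notation vec := 'rV[R]_T.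
Variables (S : set vec) (F : vec -> R).

Definition supergrad (a p : vec) := forall z, S z -> F z - F a <= dotv p (z - a).

Lemma supergrad_monotone a b p q : S a -> S b ->
  supergrad a p -> supergrad b q -> 0 <= dotv (q - p) (a - b).
Proof.
move=> Sa Sb pa qb; have := pa b Sb; have := qb a Sa.
rewrite dotvBl !dotvBr; lra.
Qed.

Hypothesis convexS : convex_vset S.

Lemma supergrad_strictly_monotone a b p q : S a -> S b -> a <> b ->
  strictly_concave_on S F -> supergrad a p -> supergrad b q ->
  0 < dotv (q - p) (a - b).
Proof.
move=> Sa Sb ab Fstrict pa qb.
have half01 : 0 < (2^-1 : R) < 1 by apply/andP; split; lra.
set m := 2^-1 *: a + (1 - 2^-1) *: b.
have Sm : S m by apply: convexS => //; lra.
have := Fstrict a b 2^-1 Sa Sb ab half01; rewrite -/m.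
have := pa m Sm; have := qb m Sm.
rewrite convBl convBr !dotvZr dotvBl !dotvBr; lra.
Qed.

Lemma supergrad_strongly_concave al a b p k : S a -> S b ->
  strongly_concave_on S al F -> supergrad a p -> 0 < k < 1 ->
  F b - F a + al / 2 * k * sqnorm (a - b) <= dotv p (b - a).
Proof.
move=> Sa Sb Fstrong pa /andP[k0 k1].
have k01 : 0 <= k <= 1 by apply/andP; split; lra.
set z := k *: a + (1 - k) *: b.
have := Fstrong a b k Sa Sb k01; rewrite -/z.
have := pa z (convexS Sa Sb k01); rewrite convBl dotvZr.
set d := dotv p (b - a); set n := sqnorm (a - b) => pz Fz.
have : (1 - k) * (F b - F a + al / 2 * k * n - d) <= 0 by nra.
by rewrite pmulr_rle0 ?subr_gt0 //; lra.
Qed.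

Lemma supergrad_strongly_monotone al a b p q : S a -> S b ->
  strongly_concave_on S al F -> supergrad a p -> supergrad b q ->
  al * sqnorm (a - b) <= dotv (q - p) (a - b).
Proof.
move=> Sa Sb Fstrong pa qb.
apply: ler_lt1M; first exact: supergrad_monotone pa qb.
move=> k k01.
have := supergrad_strongly_concave Sa Sb Fstrong pa k01.
have := supergrad_strongly_concave Sb Sa Fstrong qb k01.
rewrite (sqnormBC b a) dotvBl !dotvBr; lra.
Qed.

End supergradient.

Section ae_Rintegral.
Context d (U : measurableType d) (R : realType).
Variables (mu : {measure set U -> \bar R}) (D : set U).
Hypothesis mD : measurable D.
Implicit Types f g : U -> R.

Lemma Rintegral_ae_ge0 f : measurable_fun D f ->
  {ae mu, forall x, D x -> 0 <= f x} -> 0 <= Rintegral mu D f.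
Proof.
move=> mf f0; rewrite /Rintegral (ae_eq_integral (abse \o EFin \o f)) //.
- by apply: fine_ge0; apply: integral_ge0 => x _; exact: abse_ge0.
- exact/measurable_EFinP.
- by apply: measurableT_comp => //; exact/measurable_EFinP.
- by apply: filterS f0 => x fx Dx /=; rewrite ger0_norm ?fx.
Qed.

Lemma Rintegral_ae_le f g : mu.-integrable D (EFin \o f) ->
  mu.-integrable D (EFin \o g) -> {ae mu, forall x, D x -> f x <= g x} ->
  Rintegral mu D f <= Rintegral mu D g.
Proof.
move=> intf intg fg; rewrite -subr_ge0 -RintegralB //.
apply: Rintegral_ae_ge0.
  exact/measurable_EFinP/(measurable_int _ (integrableB mD intg intf)).
by apply: filterS fg => x fgx Dx; rewrite subr_ge0 fgx.
Qed.

Lemma Rintegral_ae_eq0 f : mu.-integrable D (EFin \o f) ->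
  {ae mu, forall x, D x -> 0 <= f x} -> Rintegral mu D f = 0 ->
  {ae mu, forall x, D x -> f x = 0}.
Proof.
move=> intf f0 If0.
have mf := measurable_int _ intf.
have : (\int[mu]_(x in D) `|(f x)%:E| = 0)%E.
  rewrite (ae_eq_integral (EFin \o f)) //.
  - by rewrite -(fineK (integrable_fin_num mD intf)) -/(Rintegral _ _ _) If0.
  - exact: measurableT_comp.
  - by apply: filterS f0 => x fx Dx /=; rewrite ger0_norm ?fx.
move/(ae_eq_integral_abs _ mD (measurable_int _ intf)).
by apply: filterS => x fx Dx; have [] := fx Dx.
Qed.

Lemma ae_in_and (P Q : U -> Prop) : {ae mu, forall x, D x -> P x} ->
  {ae mu, forall x, D x -> Q x} -> {ae mu, forall x, D x -> P x /\ Q x}.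
Proof. by apply: filterS2 => x Px Qx Dx; split; [exact: Px | exact: Qx]. Qed.

Lemma integrableZl_EFin (k : R) f : mu.-integrable D (EFin \o f) ->
  mu.-integrable D (EFin \o fun x => k * f x).
Proof. by move=> /(integrableZl mD k); apply: eq_integrable. Qed.

Section sum.
Variables (I : Type) (F : I -> U -> R).
Hypothesis intF : forall i, mu.-integrable D (EFin \o F i).

Lemma integrable_sumR (s : seq I) :
  mu.-integrable D (EFin \o fun x => \sum_(i <- s) F i x).
Proof.
have := integrable_sum mD s (P := xpredT) (fun i _ => intF i).
by apply: eq_integrable => // x _; rewrite /= sumEFin.
Qed.

Lemma Rintegral_sum (s : seq I) :
  Rintegral mu D (fun x => \sum_(i <- s) F i x) = \sum_(i <- s) Rintegral mu D (F i).
Proof.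
elim: s => [|i r IHr].
  by under eq_fun do rewrite big_nil; rewrite Rintegral_cst // mul0r big_nil.
under eq_fun do rewrite big_cons.
by rewrite big_cons RintegralD ?IHr //; exact: integrable_sumR.
Qed.

End sum.

End ae_Rintegral.

Section square_integrable.
Context {R : realType}.
Implicit Types f g : R -> R.

Lemma measurable_Theta : measurable (Theta : set (measurableTypeR R)).
Proof. exact: measurable_itv. Qed.

Lemma leb_Theta : leb (Theta : set R) = 1%E.
Proof. by rewrite /leb /Theta lebesgue_measure_itv /= lte_fin ltr01 sube0. Qed.

Lemma integrable_cst_Theta (k : R) : leb.-integrable Theta (EFin \o cst k).
Proof.
apply/integrableP; split; first exact/measurable_EFinP/measurable_cst.
rewrite (_ : (fun x => _) = (fun x => cst `|k|%:E x)); last by apply: funext => x.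
rewrite integral_cst; last exact: measurable_Theta.
by move: leb_Theta; rewrite /leb => /= ->; rewrite mule1 ltry.
Qed.

Lemma Rintegral_cst_Theta (r : R) : Rintegral leb Theta (cst r) = r.
Proof.
rewrite Rintegral_cst; last exact: measurable_Theta.
by move: leb_Theta; rewrite /leb => /= ->; rewrite mulr1.
Qed.

Definition square_integrable f := measurable_fun Theta f /\
  leb.-integrable Theta (fun th => (f th ^+ 2)%:E).

Lemma square_integrable_cst (k : R) : square_integrable (cst k).
Proof.
split; first exact: measurable_cst.
exact: (integrable_cst_Theta (k ^+ 2)).
Qed.

Lemma integrableM_square_integrable f g : square_integrable f ->
  square_integrable g -> leb.-integrable Theta (EFin \o (fun th => f th * g th)).
Proof.
move=> [mf intf] [mg intg].
have intfg := integrableD measurable_Theta intf intg.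
apply: (le_integrable measurable_Theta); last exact: intfg.
  exact/measurable_EFinP/measurable_funM.
move=> th _ /=; rewrite lee_fin [leRHS]ger0_norm ?addr_ge0 ?sqr_ge0 // ler_norml.
by have := sqr_ge0 (f th + g th); have := sqr_ge0 (f th - g th); nra.
Qed.

Lemma square_integrable_integrable f : square_integrable f ->
  leb.-integrable Theta (EFin \o f).
Proof.
move=> sqif; have := integrableM_square_integrable sqif (square_integrable_cst 1).
apply: eq_integrable => [|th _ /=]; first exact: measurable_Theta.
by rewrite mulr1.
Qed.

Lemma square_integrableB f g : square_integrable f -> square_integrable g ->
  square_integrable (f \- g).
Proof.
move=> [mf intf] [mg intg]; split; first exact: measurable_funB.
have int2 := integrableD measurable_Theta (integrableZl measurable_Theta 2 intf)
                                         (integrableZl measurable_Theta 2 intg).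
apply: (le_integrable measurable_Theta); last exact: int2.
  by apply/measurable_EFinP/measurable_funX; exact: measurable_funB.
move=> th _ /=; rewrite lee_fin.
have := sqr_ge0 (f th + g th); have := sqr_ge0 (f th - g th).
have := sqr_ge0 (f th); have := sqr_ge0 (g th).
by move=> *; rewrite !ger0_norm; nra.
Qed.

End square_integrable.

(* Instance search does not unfold [leb]. *)
#[local] Instance leb_ae_filter (R : realType) : Filter (almost_everywhere (@leb R)).
Proof. exact: ae_filter_ringOfSetsType. Qed.

Section L2_profiles.
Context {R : realType} {T : nat}.
Local Notation vec := 'rV[R]_T.
Implicit Types (x y g h : R -> vec) (k : vec).

Lemma L2_cst k : L2 (fun _ : R => k).
Proof. by move=> t; exact: square_integrable_cst (k ord0 t). Qed.

Lemma L2B x y : L2 x -> L2 y -> L2 (fun th => x th - y th).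
Proof.
move=> Lx Ly t.
suff : square_integrable (fun th => (x th - y th) ord0 t) by [].
have -> : (fun th => (x th - y th) ord0 t) =
          (fun th => x th ord0 t) \- (fun th => y th ord0 t).
  by apply: funext => th; rewrite !mxE.
exact: square_integrableB (Lx t) (Ly t).
Qed.

Lemma integrable_dotv x y : L2 x -> L2 y ->
  leb.-integrable Theta (EFin \o fun th => dotv (x th) (y th)).
Proof.
move=> Lx Ly; apply: (integrable_sumR measurable_Theta) => t.
exact: integrableM_square_integrable (Lx t) (Ly t).
Qed.

Lemma Rintegral_dotv_cst k x : L2 x ->
  Rintegral leb Theta (fun th => dotv k (x th)) = dotv k (agg x).
Proof.
move=> Lx; rewrite /dotv Rintegral_sum; first last.
- by move=> t; exact: integrableM_square_integrable (L2_cst k t) (Lx t).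
- exact: measurable_Theta.
apply: eq_bigr => t _; rewrite mxE RintegralZl //; first exact: measurable_Theta.
exact: square_integrable_integrable (Lx t).
Qed.

Lemma aggB x y : L2 x -> L2 y -> agg (fun th => x th - y th) = agg x - agg y.
Proof.
move=> Lx Ly; apply/rowP => t; rewrite !mxE -RintegralB.
- by apply: eq_Rintegral => th _; rewrite !mxE.
- exact: measurable_Theta.
- exact: square_integrable_integrable (Lx t).
- exact: square_integrable_integrable (Ly t).
Qed.

Lemma agg_Mset (Mb : R) x : L2_in (Mset Mb) x -> Mset Mb (agg x).
Proof.
move=> [Lx Mx] t; rewrite mxE.
have intx := square_integrable_integrable (Lx t).
have xt_bounds : {ae leb, forall th, Theta th -> 0 <= x th ord0 t <= Mb + 1}.
  by apply: filterS Mx => th Mxth Tth; exact: Mxth.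
apply/andP; split.
- rewrite -[leLHS](Rintegral_cst_Theta 0).
  apply: (Rintegral_ae_le measurable_Theta (integrable_cst_Theta 0) intx).
  by apply: filterS xt_bounds => th b Tth; have /andP[] := b Tth.
- rewrite -[leRHS](Rintegral_cst_Theta (Mb + 1)).
  apply: (Rintegral_ae_le measurable_Theta intx (integrable_cst_Theta _)).
  by apply: filterS xt_bounds => th b Tth; have /andP[] := b Tth.
Qed.

Lemma Iint_split x y g h k : L2 x -> L2 y -> L2 g -> L2 h ->
  Iint x y g h = Rintegral leb Theta (fun th => dotv (g th - h th - k) (x th - y th))
                 + dotv k (agg x - agg y).
Proof.
move=> Lx Ly Lg Lh; have Lxy := L2B Lx Ly.
rewrite -aggB // -Rintegral_dotv_cst // -RintegralD.
- by apply: eq_Rintegral => th _; rewrite [in RHS]dotvBl subrK.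
- exact: measurable_Theta.
- exact: integrable_dotv (L2B (L2B Lg Lh) (L2_cst k)) Lxy.
- exact: integrable_dotv (L2_cst k) Lxy.
Qed.

End L2_profiles.

Lemma strongly_concave_on_le {R : realType} {T : nat} (S : set 'rV[R]_T) a b F :
  a <= b -> strongly_concave_on S b F -> strongly_concave_on S a F.
Proof.
move=> ab Fb x y l Sx Sy l01; apply: le_trans (Fb x y l Sx Sy l01).
have /andP[l0 l1] := l01.
rewrite lerD2l ler_wpM2r ?sqnorm_ge0 // ler_wpM2r ?mulr_ge0 ?subr_ge0 //.
by rewrite ler_pM2r.
Qed.

Lemma strictly_monotone_map_on_monotone {R : realType} {T : nat}
    (S : set 'rV[R]_T) c :
  strictly_monotone_map_on S c -> monotone_map_on S c.
Proof.
move=> cstrict X Y SX SY; have [->|/eqP XY] := eqVneq X Y.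
  by rewrite subrr /dotv big1 // => i _; rewrite mxE mul0r.
exact/ltW/cstrict.
Qed.

(* [inf E] is 0 when [E] has no lower bound. *)
Lemma inf_le_of_neq0 {R : realType} (E : set R) x : inf E != 0 -> E x -> inf E <= x.
Proof.
move=> E0 Ex; suff lbE : has_lbound E by exact: ge_inf.
apply: contrapT => nlbE; move/eqP: E0; apply; apply: inf_out => -[_]; exact: nlbE.
Qed.

Section linear_cost_game.
Context {R : realType} {T : nat}.
Local Notation vec := 'rV[R]_T.
Variables (Mb : R) (Dom : set vec) (c : vec -> vec) (u : R -> vec -> R).
Hypothesis Mset_Dom : Mset Mb `<=` Dom.

Lemma subdiff_lin_cost_supergrad th a X g : subdiff Dom (lin_cost c u) th a X g ->
  supergrad (Mset Mb) (u th) a (c X - g).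
Proof.
move=> gsub z Mz; have := gsub z (Mset_Dom Mz).
by rewrite /lin_cost dotvBl !dotvBr !(dotvC (c X)); lra.
Qed.

Definition individual_gap (x y g h : R -> vec) th :=
  dotv ((c (agg y) - h th) - (c (agg x) - g th)) (x th - y th).

Section profiles.
Variables (x y g h : R -> vec).
Hypotheses (Lx : L2_in (Mset Mb) x) (Ly : L2_in (Mset Mb) y).
Hypotheses (Hg : Hmap Dom (lin_cost c u) x g) (Hh : Hmap Dom (lin_cost c u) y h).

Lemma Iint_individual_gap : Iint x y g h =
  Rintegral leb Theta (individual_gap x y g h) +
  dotv (c (agg x) - c (agg y)) (agg x - agg y).
Proof.
rewrite (Iint_split (c (agg x) - c (agg y)) Lx.1 Ly.1 Hg.1 Hh.1).
apply: (congr2 +%R); last by [].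
apply: eq_Rintegral => th _; congr dotv.
by apply/rowP => i; rewrite !mxE; ring.
Qed.

Lemma integrable_individual_gap :
  leb.-integrable Theta (EFin \o individual_gap x y g h).
Proof.
apply: integrable_dotv; last exact: L2B Lx.1 Ly.1.
exact: L2B (L2B (L2_cst _) Hh.1) (L2B (L2_cst _) Hg.1).
Qed.

Lemma ae_supergrad : {ae leb, forall th, Theta th ->
  [/\ Mset Mb (x th), Mset Mb (y th),
  supergrad (Mset Mb) (u th) (x th) (c (agg x) - g th) &
  supergrad (Mset Mb) (u th) (y th) (c (agg y) - h th)]}.
Proof.
have := ae_in_and (ae_in_and Lx.2 Ly.2) (ae_in_and Hg.2 Hh.2).
apply: filterS => th xyth Tth; have [[Mxth Myth] [gth hth]] := xyth Tth.
by split=> //; exact: subdiff_lin_cost_supergrad.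
Qed.

Lemma individual_gap_ge0 :
  {ae leb, forall th, Theta th -> 0 <= individual_gap x y g h th}.
Proof.
apply: filterS ae_supergrad => th sg Tth; have [Mxth Myth gth hth] := sg Tth.
exact: supergrad_monotone gth hth.
Qed.

Lemma Rintegral_individual_gap_ge0 : 0 <= Rintegral leb Theta (individual_gap x y g h).
Proof.
apply: Rintegral_ae_ge0 individual_gap_ge0; first exact: measurable_Theta.
apply/measurable_EFinP; exact: measurable_int _ integrable_individual_gap.
Qed.

End profiles.

Lemma lin_cost_monotone_game : monotone_map_on (Mset Mb) c ->
  monotone_game Mb Dom (lin_cost c u).
Proof.
move=> cmon x y g h Lx Ly Hg Hh; rewrite Iint_individual_gap //.
apply: addr_ge0; first exact: Rintegral_individual_gap_ge0.
exact: cmon (agg_Mset Lx) (agg_Mset Ly).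
Qed.

Lemma lin_cost_strictly_monotone_game : monotone_map_on (Mset Mb) c ->
  (forall th, Theta th -> strictly_concave_on (Mset Mb) (u th)) ->
  strictly_monotone_game Mb Dom (lin_cost c u).
Proof.
move=> cmon ustrict; split; first exact: lin_cost_monotone_game.
move=> x y g h Lx Ly Hg Hh I0.
have := cmon _ _ (agg_Mset Lx) (agg_Mset Ly).
have := Rintegral_individual_gap_ge0 Lx Ly Hg Hh.
move: I0; rewrite Iint_individual_gap // => I0 gap0 aggx0.
have := Rintegral_ae_eq0 measurable_Theta (integrable_individual_gap Lx Ly Hg Hh)
  (individual_gap_ge0 Lx Ly Hg Hh) ltac:(lra).
apply: filterS2 (ae_supergrad Lx Ly Hg Hh) => th sg gapth Tth.
have [Mxth Myth gth hth] := sg Tth; have [//|/eqP xy] := eqVneq (x th) (y th).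
have := supergrad_strictly_monotone (@Mset_convex _ _ Mb) Mxth Myth xy
  (ustrict th Tth) gth hth.
by rewrite -/(individual_gap x y g h th) (gapth Tth) ltxx.
Qed.

Lemma lin_cost_agg_strictly_monotone_game : strictly_monotone_map_on (Mset Mb) c ->
  agg_strictly_monotone_game Mb Dom (lin_cost c u).
Proof.
move=> cstrict; split.
  exact/lin_cost_monotone_game/strictly_monotone_map_on_monotone.
move=> x y g h Lx Ly Hg Hh; rewrite Iint_individual_gap // => I0.
apply: contrapT => XY.
have := cstrict _ _ (agg_Mset Lx) (agg_Mset Ly) XY.
have := Rintegral_individual_gap_ge0 Lx Ly Hg Hh; lra.
Qed.

Lemma lin_cost_strongly_monotone_game alpha : monotone_map_on (Mset Mb) c ->
  (forall th, Theta th -> strongly_concave_on (Mset Mb) alpha (u th)) ->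
  strongly_monotone_game Mb Dom (lin_cost c u) alpha.
Proof.
move=> cmon ustrong x y g h Lx Ly Hg Hh; rewrite Iint_individual_gap //.
have Lxy := L2B Lx.1 Ly.1.
have int_sq : leb.-integrable Theta (EFin \o fun th => sqnorm (x th - y th)).
  exact: (integrable_dotv Lxy Lxy).
rewrite -RintegralZl //; last exact: measurable_Theta.
rewrite -[leLHS]addr0; apply: lerD; last exact: cmon (agg_Mset Lx) (agg_Mset Ly).
apply: (Rintegral_ae_le measurable_Theta (integrableZl_EFin measurable_Theta _ int_sq)).
  exact: integrable_individual_gap.
apply: filterS (ae_supergrad Lx Ly Hg Hh) => th sg Tth.
have [Mxth Myth gth hth] := sg Tth.
exact: (supergrad_strongly_monotone (@Mset_convex _ _ Mb) Mxth Myth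
  (ustrong th Tth) gth hth).
Qed.

Lemma lin_cost_agg_strongly_monotone_game beta :
  strongly_monotone_map_on (Mset Mb) beta c ->
  agg_strongly_monotone_game Mb Dom (lin_cost c u) beta.
Proof.
move=> cstrong x y g h Lx Ly Hg Hh; rewrite Iint_individual_gap //.
have := cstrong _ _ (agg_Mset Lx) (agg_Mset Ly).
have := Rintegral_individual_gap_ge0 Lx Ly Hg Hh; lra.
Qed.

End linear_cost_game.

Unset Implicit Arguments.

Theorem mainTheorem6 (R : realType) (T : nat) (hT : (0 < T)%N) (Mb : R)
  (hM : 0 < Mb) (Dom : set 'rV[R]_T) (Xs : R -> set 'rV[R]_T)
  (c : 'rV[R]_T -> 'rV[R]_T) (u : R -> 'rV[R]_T -> R) :
  nbhs_of_set (Mset Mb) Dom ->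
  AssumN1 Mb Xs ->
  AssumN2 Mb Dom Xs (lin_cost c u) ->
  AssumN3 Dom Xs (lin_cost c u) ->
  monotone_map_on (Mset Mb) c ->
  (forall th, Theta th -> concave_on (Mset Mb) (u th)) ->
  [/\ monotone_game Mb Dom (lin_cost c u),
      (forall th, Theta th -> strictly_concave_on (Mset Mb) (u th)) ->
        strictly_monotone_game Mb Dom (lin_cost c u),
      strictly_monotone_map_on (Mset Mb) c ->
        agg_strictly_monotone_game Mb Dom (lin_cost c u),
      forall (alpha_ : R -> R) (alpha : R),
        (forall th, Theta th -> strongly_concave_on (Mset Mb) (alpha_ th) (u th)) ->
        inf [set alpha_ th | th in Theta] = alpha -> 0 < alpha ->
        strongly_monotone_game Mb Dom (lin_cost c u) alpha
    & forall beta : R, strongly_monotone_map_on (Mset Mb) beta c ->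
        agg_strongly_monotone_game Mb Dom (lin_cost c u) beta].
Proof.
move=> [U [_ MU UD]] _ _ _ cmon _; have MD : Mset Mb `<=` Dom := subset_trans MU UD.
split.
- exact: lin_cost_monotone_game.
- exact: lin_cost_strictly_monotone_game.
- exact: lin_cost_agg_strictly_monotone_game.
- move=> alpha_ alpha ustrong inf_alpha alpha_gt0.
  apply: lin_cost_strongly_monotone_game => // th Tth.
  apply: strongly_concave_on_le (ustrong th Tth).
  by rewrite -inf_alpha; apply: inf_le_of_neq0; [rewrite inf_alpha gt_eqF | exists th].
- exact: lin_cost_agg_strongly_monotone_game.
Qed.
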